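(* Let $\nu$ be a signature and let $\mathcal A\in\widetilde{\mathrm{Hinge}}_n$ be nondegenerate. Then $\rho_\nu(\mathcal A)\ne0$.
   Context: Let $V=\mathbb C^n$ with basis $e_1,\dots,e_n$. A linear relation is a subspace $P\subset V\oplus V$; $\mathrm{Ker}\,P=\{v: v\oplus0\in P\}$, $\mathrm{Dom}\,P,\mathrm{Im}\,P$ the projections to the first and second summands, $\mathrm{Indef}\,P=\{w:0\oplus w\in P\}$, $\mathrm{rk}\,P=\dim\mathrm{Dom}\,P-\dim\mathrm{Ker}\,P$. If $\dim P=n$, choose bases $f_1,\dots,f_a,g_1,\dots,g_b,h_1,\dots,h_c$ and $F_1,\dots,F_a,G_1,\dots,G_b,H_1,\dots,H_c$ of $V$ with $P$ spanned by $0\oplus F_i$, $g_j\oplus G_j$, $h_k\oplus0$; $\lambda(P)$ maps $f_1\wedge\dots\wedge f_a\wedge g_{i_1}\wedge\dots\wedge g_{i_s}$ to $F_1\wedge\dots\wedge F_a\wedge G_{i_1}\wedge\dots\wedge G_{i_s}$ and kills the other basis monomials (up to scalar); $\lambda^m(P)$ its restriction to $\Lambda^mV$. A hinge is a sequence $\mathcal P=(P_1,\dots,P_k)$ of $n$-dimensional relations with $\mathrm{Ker}\,P_j=\mathrm{Dom}\,P_{j+1}$, $\mathrm{Im}\,P_j=\mathrm{Indef}\,P_{j+1}$, $\mathrm{Dom}\,P_1=V$, $\mathrm{Im}\,P_k=V$, $\mathrm{rk}\,P_j>0$. For each $m$ there is a nonzero $\lambda^m(P_j)$, and any two nonzero ones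 are proportional; $\lambda^m(\mathcal P)$ denotes it (up to scalar). $\widetilde{\mathrm{Hinge}}_n$ is the set of tuples $\mathcal A=(c_0\lambda^0(\mathcal P),\dots,c_n\lambda^n(\mathcal P))$ with $\mathcal P$ a hinge and $c_j\in\mathbb C$; $\mathcal A$ is nondegenerate if all $c_j\ne0$. A signature is $\nu_1\ge\dots\ge\nu_n\ge0$ (integers), $\nu_{n+1}=0$; $\mathfrak H_\nu=\bigotimes_j(\Lambda^jV)^{\otimes(\nu_j-\nu_{j+1})}$; $\Xi_\nu=\bigotimes_j(e_1\wedge\dots\wedge e_j)^{\otimes(\nu_j-\nu_{j+1})}$; $\mathfrak r_\nu(A_0,\dots,A_n)=\bigotimes_jA_j^{\otimes(\nu_j-\nu_{j+1})}$; $H_\nu$ is the span of $\mathfrak r_\nu(\lambda^0_{\mathrm{cha}}(g),\dots,\lambda^n_{\mathrm{cha}}(g))\Xi_\nu$, $g\in\mathrm{GL}_n(\mathbb C)$, where $\lambda^j_{\mathrm{cha}}(g)v_1\wedge\dots\wedge v_j=gv_1\wedge\dots\wedge gv_j$; $H_\nu$ is invariant under $\mathfrak r_\nu(\mathcal A)$ for $\mathcal A\in\widetilde{\mathrm{Hinge}}_n$, and $\rho_\nu(\mathcal A)$ is the restriction of $\mathfrak r_\nu(\mathcal A)$ to $H_\nu$. *)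

From HB Require Import structures.
From mathcomp Require Import all_boot all_order all_algebra.
Set Implicit Arguments. Unset Strict Implicit. Unset Printing Implicit Defensive.
Import Order.TTheory GRing.Theory Num.Theory.
Local Open Scope ring_scope.

(* V = F^n with standard basis e_0..e_{n-1}; vectors are row vectors 'rV_n.
   The exterior algebra Lambda V has basis e_I, I : {set 'I_n},
   e_I = e_{i_1} /\ ... /\ e_{i_k} with i_1 < ... < i_k.                    *)

Section Defs.
Variable F : fieldType.
Variable n : nat.

(* vectors of Lambda V (coordinates in the basis e_I) *)
Local Notation Ext := {ffun {set 'I_n} -> F}.
(* linear operators on Lambda V, given by their matrix entries L J I *)
Definition Op := {set 'I_n} -> {set 'I_n} -> F.

Definition scl (T : finType) (c : F) (v : {ffun T -> F}) : {ffun T -> F} :=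
  [ffun x => c * v x].

Definition applyOp (L : Op) (v : Ext) : Ext :=
  [ffun J => \sum_(I : {set 'I_n}) L J I * v I].

Definition inLam (m : nat) (v : Ext) : Prop :=
  forall I : {set 'I_n}, #|I| != m -> v I = 0.

Definition pos (T : {set 'I_n}) (i : 'I_n) : nat :=
  #|[set i' in T | (val i' < val i)%N]|.

(* wedge product of the k rows of M *)
Definition wedge (k : nat) (M : 'M[F]_(k, n)) : Ext :=
  [ffun J : {set 'I_n} => if #|J| == k then
      \det (\matrix_(a < k, b < k) \sum_(j in J | pos J j == b) M a j)
    else 0].

(* the rows of M indexed by T, in increasing order *)
Definition sel (T : {set 'I_n}) (M : 'M[F]_n) : 'M[F]_(#|T|, n) :=
  \matrix_(a < #|T|, j < n) \sum_(i in T | pos T i == a) M i j.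

(* the monomial  b_{t_1} /\ ... /\ b_{t_s}  (t_1 < ... < t_s in T) of the rows of B *)
Definition mono (B : 'M[F]_n) (T : {set 'I_n}) : Ext := wedge (sel T B).

(* ---- linear relations P ⊂ V ⊕ V, given by a spanning family of rows ---- *)
Definition Rel := 'M[F]_(n, n + n).

Definition DomP (P : Rel) : 'M[F]_(n, n) := lsubmx P.
Definition ImP (P : Rel) : 'M[F]_(n, n) := rsubmx P.
(* Ker P = {v | v ⊕ 0 ∈ P} *)
Definition KerP (P : Rel) : 'M[F]_(n + n, n) :=
  lsubmx (P :&: row_mx (1%:M : 'M[F]_n) (0 : 'M[F]_n))%MS.
(* Indef P = {w | 0 ⊕ w ∈ P} *)
Definition IndefP (P : Rel) : 'M[F]_(n + n, n) :=
  rsubmx (P :&: row_mx (0 : 'M[F]_n) (1%:M : 'M[F]_n))%MS.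
Definition rkP (P : Rel) : nat := (\rank (DomP P) - \rank (KerP P))%N.

(* hinge P_1, ..., P_k  (stored as Ps`_0, ..., Ps`_(k-1)) *)
Definition is_hinge (Ps : seq Rel) : Prop :=
  [/\ (0 < size Ps)%N,
      forall j, (j < size Ps)%N -> \rank (nth (0%R : Rel) Ps j) = n,
      forall j, (j.+1 < size Ps)%N ->
        (KerP (nth (0%R : Rel) Ps j) == DomP (nth (0%R : Rel) Ps j.+1))%MS /\ (ImP (nth (0%R : Rel) Ps j) == IndefP (nth (0%R : Rel) Ps j.+1))%MS,
      row_full (DomP (nth (0%R : Rel) Ps 0)) /\ row_full (ImP (nth (0%R : Rel) Ps (size Ps).-1)) &
      forall j, (j < size Ps)%N -> (0 < rkP (nth (0%R : Rel) Ps j))%N].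

(* the relation spanned by 0 ⊕ F_i (i < a), g_j ⊕ G_j (a <= j < a+b),
   h_k ⊕ 0 (a+b <= k), where B has rows f,g,h and C has rows F,G,H *)
Definition adapted (a b : nat) (B C : 'M[F]_n) : Rel :=
  \matrix_(i < n) row_mx (if (i < a)%N then 0 else row i B)
                         (if (i < a + b)%N then row i C else 0).

(* L is (a nonzero multiple of) lambda(P) *)
Definition lam_rep (P : Rel) (L : Op) : Prop :=
  exists (a b : nat) (B C : 'M[F]_n),
    [/\ (a + b <= n)%N, B \in unitmx, C \in unitmx,
        (P == adapted a b B C)%MS &
        exists2 c : F, c != 0 &
          forall T : {set 'I_n},
            applyOp L (mono B T) =
            if ([set i : 'I_n | (i < a)%N] \subset T) &&
               (T \subset [set i : 'I_n | (i < a + b)%N])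
            then scl c (mono C T) else 0].

(* (A_0, ..., A_n) is a nondegenerate element of tilde Hinge_n *)
Definition nondeg_hinge_tuple (A : nat -> Op) : Prop :=
  exists Ps : seq Rel, is_hinge Ps /\
    forall m, (m <= n)%N ->
      exists j, (j < size Ps)%N /\
      exists L : Op, [/\ lam_rep (nth (0%R : Rel) Ps j) L,
        (exists v, inLam m v /\ applyOp L v != 0) &
        exists2 c : F, c != 0 &
          forall v, inLam m v -> applyOp (A m) v = scl c (applyOp L v)].

Definition signature (nu : nat -> nat) : Prop :=
  forall j, (1 <= j)%N -> (j < n)%N -> (nu j.+1 <= nu j)%N.

(* multiplicity nu_j - nu_{j+1} of Lambda^j V, with nu_{n+1} = 0 *)
Definition mult (nu : nat -> nat) (j : nat) : nat :=
  (nu j - (if (j < n)%N then nu j.+1 else 0))%N.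

(* the degrees of the tensor factors of frak h_nu, in order *)
Definition degs (nu : nat -> nat) : seq nat :=
  flatten [seq nseq (mult nu j) j | j <- iota 1 n].

Definition Nf (nu : nat -> nat) : nat := size (degs nu).

(* frak h_nu, with coordinates in the product basis *)
Local Notation Tens nu := {ffun {ffun 'I_(Nf nu) -> {set 'I_n}} -> F}.

Definition rnu (nu : nat -> nat) (A : nat -> Op) (t : Tens nu) : Tens nu :=
  [ffun J : {ffun 'I_(Nf nu) -> {set 'I_n}} => \sum_(I : {ffun 'I_(Nf nu) -> {set 'I_n}})
     (\prod_(k < Nf nu) A (nth 0%N (degs nu) k) (J k) (I k)) * t I].

Definition Xi (nu : nat -> nat) : Tens nu :=
  [ffun I : {ffun 'I_(Nf nu) -> {set 'I_n}} => \prod_(k < Nf nu)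
     (if I k == [set i : 'I_n | (i < (nth 0%N (degs nu) k))%N] then 1 else 0)].

(* lambda_cha(g): e_I |-> /\_{i in I} g e_i  (g e_i = i-th column of g) *)
Definition lamcha (g : 'M[F]_n) : Op :=
  fun J I => wedge (sel I g^T) J.

(* membership in H_nu = span { r_nu(lambda_cha(g)) Xi_nu | g in GL_n } *)
Definition inH (nu : nat -> nat) (h : Tens nu) : Prop :=
  exists s : seq (F * 'M[F]_n),
    (forall p, p \in s -> p.2 \in unitmx) /\
    h = \sum_(p <- s) scl p.1 (rnu (fun _ : nat => lamcha p.2) (Xi nu)).

End Defs.

Notation Ext F n := {ffun {set 'I_n} -> F}.
Notation Tens F n nu := {ffun {ffun 'I_(Nf n nu) -> {set 'I_n}} -> F}.

From HB Require Import structures.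
From mathcomp Require Import all_boot all_order all_algebra.
Import Order.TTheory GRing.Theory Num.Theory.
Local Open Scope ring_scope.
Set Implicit Arguments. Unset Strict Implicit.

(* Take g in GL_n. The vector r_nu(lambda_cha(g)) Xi_nu lies in H_nu and, like Xi_nu, it is a
   pure tensor, whose factor of degree m is lambda_cha^m(g) (e_1 /\ ... /\ e_m). Hence the
   coordinate of r_nu(A) r_nu(lambda_cha(g)) Xi_nu at a multi-index J is the product over the
   tensor factors of the coordinates (A_m lambda_cha^m(g) e_1 /\ ... /\ e_m)_{J_m}. Each such
   coordinate is a polynomial function of g; it does not vanish identically for a suitable J_m,
   because A_m is nonzero on Lambda^m V, so some entry A_m(J_m, I) with |I| = m is nonzero, and
   it is the value of the coordinate at a g mapping e_1, ..., e_m onto the e_i, i in I. Over an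
   infinite field, finitely many polynomial functions that are not identically zero (these and
   det) have a common nonzero point g. *)

Section PolyOnLines.
Variables (R : comNzRingType) (V : lmodType R).

(* Polynomiality along affine lines is all the nonvanishing argument needs, and it avoids
   multivariate polynomials in the matrix entries. *)
Definition poly_on_lines (phi : V -> R) : Prop :=
  forall a b : V, exists p : {poly R}, forall t, phi (a + t *: b) = p.[t].

Lemma eq_poly_on_lines (phi psi : V -> R) :
  phi =1 psi -> poly_on_lines psi -> poly_on_lines phi.
Proof. by move=> eq_phi psiP a b; have [p Hp] := psiP a b; exists p => t; rewrite eq_phi. Qed.

Lemma poly_on_lines_cst c : poly_on_lines (fun _ => c).
Proof. by move=> a b; exists c%:P => t; rewrite hornerC. Qed.

Lemma poly_on_linesD phi psi :
  poly_on_lines phi -> poly_on_lines psi -> poly_on_lines (fun v => phi v + psi v).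
Proof.
move=> phiP psiP a b; have [p Hp] := phiP a b; have [q Hq] := psiP a b.
by exists (p + q) => t; rewrite hornerD Hp Hq.
Qed.

Lemma poly_on_linesM phi psi :
  poly_on_lines phi -> poly_on_lines psi -> poly_on_lines (fun v => phi v * psi v).
Proof.
move=> phiP psiP a b; have [p Hp] := phiP a b; have [q Hq] := psiP a b.
by exists (p * q) => t; rewrite hornerM Hp Hq.
Qed.

Lemma poly_on_lines_sum (I : Type) (r : seq I) (P : pred I) (phi : I -> V -> R) :
  (forall i, poly_on_lines (phi i)) ->
  poly_on_lines (fun v => \sum_(i <- r | P i) phi i v).
Proof.
move=> phiP; elim: r => [|i r IHr].
  by apply: eq_poly_on_lines (poly_on_lines_cst 0) => v; rewrite big_nil.
apply: eq_poly_on_lines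
  (_ : poly_on_lines (fun v => (if P i then phi i v else 0) + \sum_(j <- r | P j) phi j v)).
  by move=> v; rewrite big_cons; case: (P i); rewrite ?add0r.
by apply: poly_on_linesD => //; case: (P i); [apply: phiP | apply: poly_on_lines_cst].
Qed.

Lemma poly_on_lines_prod (I : Type) (r : seq I) (P : pred I) (phi : I -> V -> R) :
  (forall i, poly_on_lines (phi i)) ->
  poly_on_lines (fun v => \prod_(i <- r | P i) phi i v).
Proof.
move=> phiP; elim: r => [|i r IHr].
  by apply: eq_poly_on_lines (poly_on_lines_cst 1) => v; rewrite big_nil.
apply: eq_poly_on_lines
  (_ : poly_on_lines (fun v => (if P i then phi i v else 1) * \prod_(j <- r | P j) phi j v)).
  by move=> v; rewrite big_cons; case: (P i); rewrite ?mul1r.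
by apply: poly_on_linesM => //; case: (P i); [apply: phiP | apply: poly_on_lines_cst].
Qed.

End PolyOnLines.

Section PolyOnLinesMatrix.
Variables (R : comNzRingType) (m k : nat).

Lemma poly_on_lines_entry i j : poly_on_lines (fun g : 'M[R]_(m, k) => g i j).
Proof.
move=> a b; exists ((a i j)%:P + b i j *: 'X) => t.
by rewrite !mxE hornerD hornerC hornerZ hornerX mulrC.
Qed.

Lemma poly_on_lines_det p (M : 'M[R]_(m, k) -> 'M[R]_p) :
  (forall i j, poly_on_lines (fun g => M g i j)) -> poly_on_lines (fun g => \det (M g)).
Proof.
move=> MP; apply: poly_on_lines_sum => s.
by apply: poly_on_linesM; [apply: poly_on_lines_cst | apply: poly_on_lines_prod].
Qed.

End PolyOnLinesMatrix.

Section CommonNonzero.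
Variables (R : numDomainType) (V : lmodType R).

Lemma poly_nat_nonroot (p : {poly R}) : p != 0 -> exists k : nat, p.[k%:R] != 0.
Proof.
move=> p_neq0; set s := [seq (k%:R : R) | k <- iota 0 (size p)].
have [roots_s|/allPn[_ /mapP[k _ ->]]] := boolP (all (root p) s); last by exists k.
have uniq_s : uniq s.
  by rewrite map_inj_uniq ?iota_uniq // => x y /eqP; rewrite eqr_nat => /eqP.
by have := max_poly_roots p_neq0 roots_s uniq_s; rewrite size_map size_iota ltnn.
Qed.

(* On the line through a and b both restrictions are nonzero polynomials, hence so is their
   product. *)
Lemma poly_on_lines_mul_neq0 (phi psi : V -> R) a b :
  poly_on_lines phi -> poly_on_lines psi -> phi a != 0 -> psi b != 0 ->
  exists v, phi v * psi v != 0.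
Proof.
move=> phiP psiP phia psib.
have [p Hp] := phiP a (b - a); have [q Hq] := psiP a (b - a).
have p_neq0 : p != 0.
  by apply: contraNneq phia => p0; rewrite -[a]addr0 -(scale0r (b - a)) Hp p0 horner0.
have q_neq0 : q != 0.
  apply: contraNneq psib => q0.
  by rewrite -[b](subrK a) addrC -[b - a]scale1r Hq q0 horner0.
have [k Hk] := poly_nat_nonroot (mulf_neq0 p_neq0 q_neq0).
by exists (a + k%:R *: (b - a)); rewrite Hp Hq -hornerM.
Qed.

Lemma poly_on_lines_common_nonzero (I : eqType) (r : seq I) (phi : I -> V -> R) :
  (forall i, poly_on_lines (phi i)) -> {in r, forall i, exists a, phi i a != 0} ->
  exists v, {in r, forall i, phi i v != 0}.
Proof.
move=> phiP nz_phi; suff [v] : exists v, \prod_(i <- r) phi i v != 0.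
  by rewrite prodf_seq_neq0 => /allP nz_v; exists v => i /nz_v.
elim: r nz_phi => [|i r IHr] nz_phi; first by exists 0; rewrite big_nil oner_eq0.
have [v nz_v] : exists v, \prod_(j <- r) phi j v != 0.
  by apply: IHr => j rj; apply: nz_phi; rewrite inE rj orbT.
have [a nz_a] := nz_phi i (mem_head i r).
have prodP := poly_on_lines_prod r xpredT phiP.
have [w nz_w] := poly_on_lines_mul_neq0 (phiP i) prodP nz_a nz_v.
by exists w; rewrite big_cons.
Qed.

End CommonNonzero.

Definition init_seg (n m : nat) : {set 'I_n} := [set i : 'I_n | (i < m)%N].

Section Positions.
Variable n : nat.
Implicit Types (I : {set 'I_n}) (i j : 'I_n).

Lemma card_init_seg m : (m <= n)%N -> #|init_seg n m| = m.
Proof.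
move=> le_mn; rewrite -sum1_card (eq_bigl (fun i : 'I_n => true && (i < m)%N)) => [|i].
  by rewrite (big_ord_narrow_cond le_mn) /= sum1_card card_ord.
by rewrite inE.
Qed.

Lemma pos_init_seg m i : (i < m)%N -> pos (init_seg n m) i = i.
Proof.
move=> lt_im; rewrite /pos -(card_init_seg (ltnW (ltn_ord i))); apply: eq_card => j.
by rewrite !inE andb_idl // => /ltn_trans; apply.
Qed.

Lemma pos_lt_card I i : i \in I -> (pos I i < #|I|)%N.
Proof.
move=> iI; apply: proper_card; apply/properP; split.
  by apply/subsetP => j; rewrite inE => /andP[].
by exists i => //; rewrite inE ltnn andbF.
Qed.

Lemma ltn_pos I i j : i \in I -> j \in I -> (i < j)%N -> (pos I i < pos I j)%N.
Proof.
move=> iI jI lt_ij; apply: proper_card; apply/properP; split.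
  by apply/subsetP => k; rewrite !inE => /andP[-> /ltn_trans]; apply.
by exists i; rewrite !inE ?iI ?lt_ij // ltnn andbF.
Qed.

Lemma pos_inj I : {in I &, injective (pos I)}.
Proof.
move=> i j iI jI eq_pos; case: (ltngtP i j) => [lt_ij|lt_ji|/val_inj //].
  by have := ltn_pos iI jI lt_ij; rewrite eq_pos ltnn.
by have := ltn_pos jI iI lt_ji; rewrite eq_pos ltnn.
Qed.

(* [pos I] is injective on [I] with values below [#|I|], hence onto [0, #|I|). *)
Lemma pos_onto I b : (b < #|I|)%N -> exists2 j, j \in I & pos I j = b.
Proof.
move=> lt_bI; set s := [seq pos I j | j <- enum I].
have uniq_s : uniq s.
  by rewrite map_inj_in_uniq ?enum_uniq // => i j; rewrite !mem_enum; apply: pos_inj.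
have sub_s : {subset s <= iota 0 #|I|}.
  by move=> _ /mapP[j jI ->]; rewrite mem_iota pos_lt_card // -mem_enum.
have size_s : size (iota 0 #|I|) = size s by rewrite size_iota size_map cardE.
have [_ eq_s] := uniq_min_size uniq_s sub_s (eq_leq size_s).
have /mapP[j] : b \in s by rewrite eq_s mem_iota.
by rewrite mem_enum => jI ->; exists j.
Qed.

End Positions.

Lemma ffun_neq0_exists (T : finType) (R : nmodType) (f : {ffun T -> R}) :
  f != 0 -> exists x, f x != 0.
Proof.
move=> nz_f; apply/existsP; apply: contraNT nz_f => /existsPn f0.
by apply/eqP/ffunP => x; rewrite ffunE; apply/eqP/negbNE.
Qed.

Lemma sumr_neq0_exists (T : finType) (R : nmodType) (f : T -> R) :
  \sum_x f x != 0 -> exists x, f x != 0.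
Proof.
move=> nz_sum; apply/existsP; apply: contraNT nz_sum => /existsPn f0.
by apply/eqP/big1 => x _; apply/eqP/negbNE.
Qed.

Section LambdaCha.
Variables (F : fieldType) (n : nat).
Implicit Types (I J S T : {set 'I_n}) (g : 'M[F]_n).

Lemma sel_init_seg m (M : 'M[F]_n) (a : 'I_#|init_seg n m|) (i : 'I_n) j :
  i = a :> nat -> sel (init_seg n m) M a j = M i j.
Proof.
move=> eq_ia; have [k kT pos_k] := pos_onto (ltn_ord a).
have eq_ki : k = i.
  have lt_km : (k < m)%N by rewrite inE in kT.
  by apply: val_inj; rewrite /= eq_ia -pos_k pos_init_seg.
rewrite eq_ki in kT pos_k; rewrite /sel mxE (eq_bigl (pred1 i)) ?big_pred1_eq // => k' /=.
apply/andP/eqP => [[k'T /eqP pos_k'] | ->]; last by rewrite kT pos_k.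
by apply: (pos_inj k'T kT); rewrite pos_k' pos_k.
Qed.

Lemma poly_on_lines_lamcha S T : poly_on_lines (fun g => lamcha g S T).
Proof.
pose entry a b g := \sum_(j in S | pos S j == b) \sum_(i in T | pos T i == a) g j i.
apply: (eq_poly_on_lines (psi := fun g => if #|S| == #|T|
  then \det (\matrix_(a < #|T|, b < #|T|) entry a b g) else 0)).
  move=> g; rewrite /lamcha /wedge ffunE; case: ifP => // _; congr (\det _).
  apply/matrixP => a b; rewrite !mxE; apply: eq_bigr => j _.
  by rewrite mxE; apply: eq_bigr => i _; rewrite mxE.
case: (#|S| == #|T|); last exact: poly_on_lines_cst.
apply: poly_on_lines_det => a b.
apply: (eq_poly_on_lines (psi := entry a b)) => [g|]; first by rewrite mxE.
by do 2![apply: poly_on_lines_sum => ?]; apply: poly_on_lines_entry.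
Qed.

(* The witness sends [e_1, ..., e_m] to the basis vectors [e_i], [i] in [I], in increasing order. *)
Lemma lamcha_init_seg_delta I m :
  #|I| = m -> exists g, forall S, lamcha g S (init_seg n m) = (S == I)%:R.
Proof.
move=> cardI; pose g : 'M[F]_n := \matrix_(i, k) ((i \in I) && (pos I i == k))%:R.
have cardT : #|init_seg n m| = #|I|.
  by rewrite card_init_seg -cardI // -[X in (_ <= X)%N]card_ord max_card.
have selE (a : 'I_#|init_seg n m|) j :
    sel (init_seg n m) g^T a j = ((j \in I) && (pos I j == a))%:R.
  have lt_an : (a < n)%N.
    by rewrite -[X in (_ < X)%N]card_ord (leq_trans (ltn_ord a)) ?max_card.
  by rewrite (@sel_init_seg _ _ _ (Ordinal lt_an)) // !mxE.
exists g => S; rewrite /lamcha /wedge ffunE.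
have [-> | neq_SI] := eqVneq S I.
  rewrite -cardT eqxx (_ : \matrix_(_, _) _ = 1%:M) ?det1 //.
  apply/matrixP => a b; rewrite !mxE.
  have lt_bI : (b < #|I|)%N by rewrite -cardT.
  have [j jI pos_j] := pos_onto lt_bI.
  rewrite (eq_bigl (pred1 j)) ?big_pred1_eq => [|k /=].
    by rewrite selE jI pos_j val_eqE eq_sym.
  apply/andP/eqP => [[kI /eqP pos_k] | ->]; last by rewrite jI pos_j.
  by apply: (pos_inj kI jI); rewrite pos_k pos_j.
case: eqP => // cardS.
have /subsetPn[i iI iNS] : ~~ (I \subset S).
  by apply: contra neq_SI => subIS; rewrite eq_sym eqEcard subIS cardS cardT /=.
have lt_i : (pos I i < #|init_seg n m|)%N by rewrite cardT pos_lt_card.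
rewrite (expand_det_row _ (Ordinal lt_i)) big1 // => b _.
rewrite mxE big1 ?mul0r // => j /andP[jS _]; rewrite selE.
suff /negbTE -> : ~~ ((j \in I) && (pos I j == pos I i)) by [].
apply/andP => -[jI /eqP /(pos_inj jI iI) eq_ji].
by rewrite -eq_ji jS in iNS.
Qed.

Definition lamcha_coord (L : Op F n) m J g : F :=
  \sum_S L J S * lamcha g S (init_seg n m).

Lemma poly_on_lines_lamcha_coord (L : Op F n) m J : poly_on_lines (lamcha_coord L m J).
Proof.
apply: poly_on_lines_sum => S.
by apply: poly_on_linesM; [apply: poly_on_lines_cst | apply: poly_on_lines_lamcha].
Qed.

Lemma lamcha_coord_neq0 (L : Op F n) m J I :
  #|I| = m -> L J I != 0 -> exists g, lamcha_coord L m J g != 0.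
Proof.
move=> cardI nz_L; have [g gE] := lamcha_init_seg_delta cardI.
exists g; rewrite /lamcha_coord (bigD1 I) //= gE eqxx mulr1 big1 ?addr0 //.
by move=> S /negbTE neq_SI; rewrite gE neq_SI mulr0.
Qed.

Lemma rnu_prod_tensor nu (B : nat -> Op F n) (x : 'I_(Nf n nu) -> {set 'I_n} -> F) :
  rnu B [ffun I : {ffun 'I_(Nf n nu) -> {set 'I_n}} => \prod_(k < Nf n nu) x k (I k)] =
  [ffun J : {ffun 'I_(Nf n nu) -> {set 'I_n}} =>
     \prod_(k < Nf n nu) \sum_(S : {set 'I_n}) B (nth 0%N (degs n nu) k) (J k) S * x k S].
Proof.
apply/ffunP => J; rewrite !ffunE bigA_distr_bigA; apply: eq_bigr => I _.
by rewrite ffunE big_split.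
Qed.

Lemma rnu_lamcha_Xi nu (A : nat -> Op F n) g (J : {ffun 'I_(Nf n nu) -> {set 'I_n}}) :
  rnu A (rnu (fun=> lamcha g) (Xi F n nu)) J =
  \prod_(k < Nf n nu)
    lamcha_coord (A (nth 0%N (degs n nu) k)) (nth 0%N (degs n nu) k) (J k) g.
Proof.
set d := nth 0%N (degs n nu).
rewrite /Xi (rnu_prod_tensor _ (fun k S => if S == init_seg n (d k) then 1 else 0)).
rewrite (rnu_prod_tensor _
  (fun k S' => \sum_S lamcha g S' S * (if S == init_seg n (d k) then 1 else 0))).
rewrite ffunE; apply: eq_bigr => k _; apply: eq_bigr => S _; congr (_ * _).
rewrite (bigD1 (init_seg n (d k))) //= eqxx mulr1 big1 ?addr0 // => T /negbTE ->.
by rewrite mulr0.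
Qed.

Lemma inH_rnu_lamcha_Xi nu g : g \in unitmx -> inH (rnu (fun=> lamcha g) (Xi F n nu)).
Proof.
move=> g_unit; exists [:: (1, g)]; split=> [p|]; first by rewrite inE => /eqP ->.
by rewrite big_seq1; apply/ffunP => J; rewrite [RHS]ffunE mul1r.
Qed.

Lemma nondeg_hinge_tuple_entry (A : nat -> Op F n) m :
  nondeg_hinge_tuple A -> (m <= n)%N -> exists J I, #|I| = m /\ A m J I != 0.
Proof.
move=> [Ps [_ nondeg]] le_mn.
have [j [_ [L [_ [v [v_m nz_Lv]] [c nz_c Am]]]]] := nondeg m le_mn.
have [J nz_LvJ] := ffun_neq0_exists nz_Lv.
have : applyOp (A m) v J != 0 by rewrite Am // ffunE mulf_neq0.
rewrite ffunE => /sumr_neq0_exists[I]; rewrite mulf_eq0 negb_or => /andP[nz_A nz_vI].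
exists J, I; split=> //.
by apply/eqP; apply: contraNT nz_vI => /v_m ->.
Qed.

Lemma nondeg_hinge_tuple_rows (A : nat -> Op F n) :
  nondeg_hinge_tuple A -> exists J : nat -> {set 'I_n},
    forall m, (m <= n)%N -> exists2 I : {set 'I_n}, #|I| = m & A m (J m) I != 0.
Proof.
move=> nondegA.
exists (fun m => odflt set0 [pick J | [exists I : {set 'I_n}, (#|I| == m) && (A m J I != 0)]]).
move=> m le_mn.
case: pickP => [J /existsP[I /andP[/eqP cardI nz_AI]] | none]; first by exists I.
have [J [I [cardI nz_AI]]] := nondeg_hinge_tuple_entry nondegA le_mn.
by have /existsP[] := negbT (none J); exists I; rewrite cardI eqxx.
Qed.

End LambdaCha.

Lemma mem_degs n nu d : d \in degs n nu -> (0 < d <= n)%N.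
Proof.
case/flattenP => _ /mapP[j j_in ->]; rewrite mem_nseq => /andP[_ /eqP ->].
by rewrite mem_iota add1n ltnS in j_in.
Qed.

Theorem corollary2p15 (F : numClosedFieldType) (n : nat) (nu : nat -> nat)
    (A : nat -> Op F n) :
  signature n nu ->
  nondeg_hinge_tuple A ->
  exists h : Tens F n nu, inH h /\ rnu A h != 0.
Proof.
move=> _ /nondeg_hinge_tuple_rows[J nz_AJ].
pose phi m (g : 'M[F]_n) := if m is 0 then \det g else lamcha_coord (A m) m (J m) g.
have [g nz_phi] : exists g, {in iota 0 n.+1, forall m, phi m g != 0}.
  apply: poly_on_lines_common_nonzero => [[|m]|[|m]].
  - exact: poly_on_lines_det (@poly_on_lines_entry _ _ _).
  - exact: poly_on_lines_lamcha_coord.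
  - by move=> _; exists 1%:M; rewrite /phi det1 oner_eq0.
  - by rewrite mem_iota ltnS => /nz_AJ[I cardI /(lamcha_coord_neq0 cardI)].
exists (rnu (fun=> lamcha g) (Xi F n nu)); split.
  by apply: inH_rnu_lamcha_Xi; rewrite unitmxE unitfE (nz_phi 0%N).
set d := nth 0%N (degs n nu).
apply/eqP => /ffunP /(_ [ffun k : 'I_(Nf n nu) => J (d k)]); rewrite rnu_lamcha_Xi !ffunE.
apply/eqP/prodf_neq0 => k _; rewrite ffunE.
have /andP[d_gt0 d_le_n] : (0 < d k <= n)%N by apply/mem_degs/mem_nth.
have /(_ (d k)) := nz_phi; rewrite mem_iota ltnS d_le_n => /(_ isT).
by rewrite /phi -/(d k); case: (d k) d_gt0.
Qed.
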